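(* Suppose $d^{(1)}_{15}<0$, $d^{(1)}_{24}<0$ and $d^{(4)}_{12}<0$. Then every section $\mathcal{A}\in H^0(\bigwedge^2\mathcal{F}\otimes\mathcal{E}\otimes\det\mathcal{E}^\vee)$ is singular above every point $p\in\mathbb{P}^1$ at which $a^{(1)}_{25}$ vanishes. (Consequently, if $C_{\mathcal{A}}$ is a smooth curve then $d^{(1)}_{25}=0$.)
   Context: Work over $\mathbb{C}$. Fix $g\ge0$, $N=g+4$, $\mathcal{E}\cong\bigoplus_{k=1}^4\mathcal{O}_{\mathbb{P}^1}(e_k)$ with $e_1\le\dots\le e_4$, $\sum e_k=N$, and $\mathcal{F}\cong\bigoplus_{i=1}^5\mathcal{O}(f_i)$ with $f_1\le\dots\le f_5$, $\sum f_i=2N$, splittings fixed; $d^{(k)}_{ij}=f_i+f_j+e_k-N$. A section $\mathcal{A}\in H^0(\bigwedge^2\mathcal{F}\otimes\mathcal{E}\otimes\det\mathcal{E}^\vee)$ is a quadruple $(A_1,\dots,A_4)$ of $5\times5$ alternating matrices whose $(i,j)$ entry $a^{(k)}_{ij}$ of $A_k$ is a homogeneous form in $\mathbb{C}[s,t]$ of degree $d^{(k)}_{ij}$ (zero if negative). $C_{\mathcal{A}}\subset\mathbb{P}(\mathcal{E})$ is the subscheme cut out by the five $4\times4$ principal sub-Pfaffians of $\mathcal{A}(\mathbf{x})=\sum_kA_kx_k$ ($x_1,\dots,x_4$ fiber coordinates). $\mathcal{A}$ is singular above $p$ if some point of $C_{\mathcal{A}}$ over $p$ has Zariski tangent space of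 dimension $\ne1$. *)

From HB Require Import structures.
From mathcomp Require Import all_boot all_order all_algebra.
From mathcomp Require Import mpoly.
Set Implicit Arguments. Unset Strict Implicit. Unset Printing Implicit Defensive.
Import Order.TTheory GRing.Theory Num.Theory.
Local Open Scope ring_scope.

Section Defs.
Variable F : fieldType.

(* degree d^{(k)}_{ij} = f_i + f_j + e_k - N  (indices shifted to start at 0) *)
Definition dgr (N : int) (e : 'I_4 -> int) (f : 'I_5 -> int) (k : 'I_4) (i j : 'I_5)
  : int := f i + f j + e k - N.

(* A section of  /\^2 F (x) E (x) det E^v : quadruple of 5x5 alternating matrices,
   entry (i,j) of A_k a binary form in C[s,t] (variables 'X_0 = s, 'X_1 = t)
   homogeneous of degree d^{(k)}_{ij}, and zero if that degree is negative. *)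
Definition is_section (N : int) (e : 'I_4 -> int) (f : 'I_5 -> int)
  (A : 'I_4 -> 'I_5 -> 'I_5 -> {mpoly F[2]}) : Prop :=
  (forall k i, A k i i = 0) /\
  (forall k i j, A k j i = - A k i j) /\
  (forall k i j, 0 <= dgr N e f k i j -> A k i j \is (absz (dgr N e f k i j)).-homog) /\
  (forall k i j, dgr N e f k i j < 0 -> A k i j = 0).

(* Cox-type coordinates on P(E): variables 'X_0 = s, 'X_1 = t, 'X_(2+k) = x_(k+1). *)
Definition st_var (i : 'I_2) : 'I_6 := widen_ord (isT : (2 <= 6)%N) i.
Definition x_var (k : 'I_4) : 'I_6 := rshift 2 k.

Definition lift26 (p : {mpoly F[2]}) : {mpoly F[6]} :=
  mmap (@mpolyC 6 F) (fun i => 'X_(st_var i)) p.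

Definition Amat (A : 'I_4 -> 'I_5 -> 'I_5 -> {mpoly F[2]}) (i j : 'I_5) : {mpoly F[6]} :=
  \sum_(k < 4) lift26 (A k i j) * 'X_(x_var k).

Definition Pf4 (M : 'I_5 -> 'I_5 -> {mpoly F[6]}) (a b c d : 'I_5) : {mpoly F[6]} :=
  M a b * M c d - M a c * M b d + M a d * M b c.

Definition pfaff (A : 'I_4 -> 'I_5 -> 'I_5 -> {mpoly F[2]}) (i : 'I_5) : {mpoly F[6]} :=
  Pf4 (Amat A) (lift i (inord 0)) (lift i (inord 1)) (lift i (inord 2)) (lift i (inord 3)).

Definition on_curve A (pt : 'I_6 -> F) : Prop := forall i, (pfaff A i).@[pt] = 0.

(* Affine chart of P(E): base coordinate number b set to 1, fiber coordinate x_j set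
   to 1; the remaining 4 coordinates are affine coordinates of the chart.  The
   Jacobian of the local equations (the five Pfaffians) w.r.t. the free coordinates,
   with the two fixed columns zeroed out. *)
Definition free_var (b : 'I_2) (j : 'I_4) (l : 'I_6) : bool :=
  (l != st_var b) && (l != x_var j).

Definition jac A (pt : 'I_6 -> F) (b : 'I_2) (j : 'I_4) : 'M[F]_(5, 6) :=
  \matrix_(i < 5, l < 6) (if free_var b j l then ((pfaff A i)^`M(l)).@[pt] else 0).

(* dimension of the Zariski tangent space of C_A at the point, in the chart (b,j):
   kernel of the Jacobian in the 4-dimensional chart *)
Definition tangent_dim A pt b j : nat := (4 - \rank (jac A pt b j))%N.

Definition mkpt (c : F) (p : 'I_2 -> F) (x : 'I_4 -> F) (l : 'I_6) : F :=
  match split (l : 'I_(2 + 4)) with inl s => c * p s | inr k => x k end.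

Definition singular_above A (p : 'I_2 -> F) : Prop :=
  exists (c : F) (b : 'I_2) (x : 'I_4 -> F) (j : 'I_4),
    c * p b = 1 /\ x j = 1 /\ on_curve A (mkpt c p x) /\
    tangent_dim A (mkpt c p x) b j <> 1%N.

End Defs.

From HB Require Import structures.
From mathcomp Require Import all_boot all_order all_algebra.
From mathcomp Require Import mpoly.
From mathcomp Require Import zify.
Set Implicit Arguments. Unset Strict Implicit. Unset Printing Implicit Defensive.
Import Order.TTheory GRing.Theory Num.Theory.
Local Open Scope ring_scope.

(* Monotonicity of e and f propagates the three negative degrees: a_{12}
   vanishes in all four matrices, and in A_1 the first row and the entries
   a_{2j}, j <= 4, vanish identically.  Over a zero p of a^{(1)}_{25} take the
   fiber point x = (1,0,0,0), where rows 1 and 2 of A(x) vanish.  Every 4x4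
   sub-Pfaffian is linear in row 1 or in row 2, so the point lies on C_A; the
   three containing both rows have no a_{12} term, so they are sums of products
   of two functions vanishing at the point and their differentials vanish there.
   Hence the Jacobian has rank at most 2 and the tangent space dimension is at
   least 2.  If d^{(1)}_{25} <> 0, then a^{(1)}_{25} is zero or a binary form of
   positive degree, so it has a zero on P^1. *)

Lemma lift_inord_small (i : 'I_5) (k : nat) :
  (k < i)%N -> lift i (inord k : 'I_4) = inord k.
Proof.
move=> lt_ki; have lt_k4 : (k < 4)%N by have := ltn_ord i; lia.
by apply/val_inj; rewrite /= /bump !inordK //; [rewrite leqNgt lt_ki | lia].
Qed.

Lemma lift_inord0_le1 (i : 'I_5) : (lift i (inord 0 : 'I_4) <= 1)%N.
Proof. by rewrite /= /bump inordK //; case: (i <= 0)%N. Qed.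

Lemma mkpt_st (F : fieldType) c p x i : @mkpt F c p x (st_var i) = c * p i.
Proof.
rewrite /mkpt; have -> : (st_var i : 'I_(2 + 4)) = lshift 4 i by apply/val_inj.
by rewrite -[lshift 4 i]/(unsplit (inl i)) unsplitK.
Qed.

Lemma mkpt_x (F : fieldType) c p x k : @mkpt F c p x (x_var k) = x k.
Proof. by rewrite /mkpt /x_var -[rshift 2 k]/(unsplit (inr k)) unsplitK. Qed.

Lemma meval_lift26 (F : fieldType) (q : {mpoly F[2]}) (v : 'I_6 -> F) :
  (lift26 q).@[v] = q.@[fun i => v (st_var i)].
Proof.
rewrite /lift26 /mmap raddf_sum mevalE; apply: eq_bigr => m _.
rewrite -[LHS]/(meval v _) mevalM mevalC /mmap1 rmorph_prod; congr (_ * _).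
by apply: eq_bigr => i _; rewrite rmorphXn -[X in X ^+ _]/(meval v _) mevalXU.
Qed.

Lemma meval_Amat_mkpt (F : fieldType) A c p x (a b : 'I_5) :
  (Amat A a b).@[@mkpt F c p x] = \sum_k x k * (A k a b).@[fun i => c * p i].
Proof.
rewrite /Amat (big_morph (meval _) (mevalD _) (meval0 _)); apply: eq_bigr => k _.
rewrite mevalM mevalXU mkpt_x meval_lift26 mulrC.
by congr (_ * _); apply: meval_eq => i; rewrite mkpt_st.
Qed.

Lemma meval_dhomog (F : fieldType) n d (q : {mpoly F[n]}) (v : 'I_n -> F) c :
  q \is d.-homog -> q.@[fun i => c * v i] = c ^+ d * q.@[v].
Proof.
move=> /dhomogP q_homog; rewrite !mevalE mulr_sumr.
apply: eq_big_seq => m /q_homog <-; rewrite mulrCA; congr (_ * _).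
rewrite [X in c ^+ X](mdegE m) (big_morph (fun k => c ^+ k) (exprD c) (expr0 c)).
by rewrite -big_split /=; apply: eq_bigr => i _; exact: exprMn.
Qed.

Lemma meval_mderivM_eq0 (F : fieldType) n (P Q : {mpoly F[n]}) l v :
  P.@[v] = 0 -> Q.@[v] = 0 -> ((P * Q)^`M(l)).@[v] = 0.
Proof. by move=> P0 Q0; rewrite mderivM mevalD !mevalM P0 Q0 !mulr0 mul0r addr0. Qed.

Section Pfaffian4.
Variables (F : fieldType) (M : 'I_5 -> 'I_5 -> {mpoly F[6]}) (v : 'I_6 -> F).

Lemma meval_Pf4_eq0 a b c d :
  (forall j, (M a j).@[v] = 0) -> (Pf4 M a b c d).@[v] = 0.
Proof. by move=> Ma0; rewrite /Pf4 mevalD mevalB !mevalM !Ma0 !mul0r subrr addr0. Qed.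

Lemma meval_mderiv_Pf4_eq0 a b c d l :
  M a b = 0 -> (forall j, (M a j).@[v] = 0) -> (forall j, (M b j).@[v] = 0) ->
  ((Pf4 M a b c d)^`M(l)).@[v] = 0.
Proof.
move=> Mab0 Ma0 Mb0; rewrite /Pf4 Mab0 mul0r mderivD mderivB mderiv0.
by rewrite mevalD mevalB meval0 !meval_mderivM_eq0 // subrr addr0.
Qed.

End Pfaffian4.

Lemma mxrank_le_zero_rows (F : fieldType) m n r (M : 'M[F]_(m, n)) :
  (forall i : 'I_m, (r <= i)%N -> row i M = 0) -> (\rank M <= r)%N.
Proof.
move=> rows0; have -> : M = pid_mx r *m M.
  apply/matrixP => i l; rewrite mxE (bigD1 i) //= big1 => [|k ne_ki]; last first.
    by rewrite mxE eq_sym (inj_eq val_inj) (negbTE ne_ki) mul0r.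
  rewrite mxE eqxx addr0 /=; case: ltnP => [_ | /rows0 Mi0]; first by rewrite mul1r.
  by have := congr1 (fun R : 'rV_n => R 0 l) Mi0; rewrite !mxE mul0r => <-.
apply: leq_trans (mxrankM_maxl _ _) _.
by rewrite -(pid_mx_minv _ m m r) rank_pid_mx ?geq_minl ?geq_minr.
Qed.

Lemma big_ord2 (R : Type) (idx : R) (op : Monoid.law idx) (G : 'I_2 -> R) :
  \big[op/idx]_i G i = op (G ord0) (G ord_max).
Proof. by rewrite big_ord_recl big_ord1; congr (op _ (G _)); apply: val_inj. Qed.

Lemma binary_form_root (F : closedFieldType) n (P : {mpoly F[2]}) :
  P \is n.-homog -> (0 < n)%N ->
  exists p : 'I_2 -> F, (p ord0, p ord_max) != (0, 0) /\ P.@[p] = 0.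
Proof.
move=> P_homog n_gt0; pose e0 : 'I_2 -> F := fun i => (i == ord0)%:R.
have [Pe0|Pe0_nz] := eqVneq P.@[e0] 0.
  by exists e0; split => //; rewrite /e0 eqxx xpair_eqE oner_eq0.
(* dehomogenize: [q y = P(y, 1)], whose coefficient of degree [n] is [P(1, 0)] *)
pose pv (y : F) : 'I_2 -> F := fun i => if i == ord0 then y else 1.
pose q : {poly F} := \sum_(m <- msupp P) P@_m *: 'X^(m ord0).
have qE y : q.[y] = P.@[pv y].
  rewrite mevalE /q horner_sum; apply: eq_bigr => m _.
  by rewrite hornerZ hornerXn big_ord2 /pv /= expr1n mulr1.
have q_n : q`_n = P.@[e0].
  rewrite /q coef_sumMXn mevalE big_mkcond /=; apply: eq_big_seq => m m_supp.
  have := dhomog_mf P_homog m_supp; rewrite [X in X = _ -> _](mdegE m) big_ord2.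
  rewrite big_ord2 /e0 /= expr1n mul1r expr0n.
  case: (m ord_max) => [|k] mdeg_n.
    by rewrite addn0 in mdeg_n; rewrite mdeg_n eqxx mulr1.
  suff -> : (m ord0 == n) = false by rewrite mulr0.
  by apply/negbTE/eqP; lia.
have : size q != 1%N.
  by apply: contra Pe0_nz => /eqP q_size; rewrite -q_n nth_default // q_size.
case/closed_rootP => y /rootP qy0; exists (pv y); split; last by rewrite -qE.
by rewrite /pv /= xpair_eqE oner_eq0 andbF.
Qed.

Section SingularPointOverRoot.
Variables (F : fieldType) (A : 'I_4 -> 'I_5 -> 'I_5 -> {mpoly F[2]}).
Variables (p : 'I_2 -> F) (c : F).
Hypothesis A_01_eq0 : forall k, A k (inord 0) (inord 1) = 0.
Hypothesis A1_rows01_eq0 :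
  forall a j : 'I_5, (a <= 1)%N -> (A (inord 0) a j).@[fun i => c * p i] = 0.

Let x1 : 'I_4 -> F := fun k => (k == inord 0)%:R.
Let pt := mkpt c p x1.

Lemma Amat_rows01_eq0 (a j : 'I_5) : (a <= 1)%N -> (Amat A a j).@[pt] = 0.
Proof.
move=> le_a1; rewrite meval_Amat_mkpt (bigD1 (inord 0)) //= big1 => [|k /negbTE nk].
  by rewrite /x1 eqxx mul1r A1_rows01_eq0 // addr0.
by rewrite /x1 nk mul0r.
Qed.

Lemma on_curve_rows01 : on_curve A pt.
Proof.
by move=> i; apply: meval_Pf4_eq0 => j; rewrite Amat_rows01_eq0 ?lift_inord0_le1.
Qed.

Lemma jac_rank_rows01 b : (\rank (jac A pt b (inord 0)) <= 2)%N.
Proof.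
apply: mxrank_le_zero_rows => i le_2i; apply/rowP => l; rewrite !mxE; case: ifP => // _.
rewrite /pfaff (@lift_inord_small i 0 (ltnW le_2i)) (@lift_inord_small i 1 le_2i).
have Amat_01 : Amat A (inord 0) (inord 1) = 0.
  by rewrite /Amat big1 // => k _; rewrite A_01_eq0 /lift26 mmap0 mul0r.
by apply: meval_mderiv_Pf4_eq0 => // j; rewrite Amat_rows01_eq0 // inordK.
Qed.

Lemma singular_above_rows01 b : c * p b = 1 -> singular_above A p.
Proof.
move=> cpb1; exists c, b, x1, (inord 0).
split=> //; split; first by rewrite /x1 eqxx.
split; first exact: on_curve_rows01.
by rewrite /tangent_dim; move: (jac_rank_rows01 b); case: (\rank _) => [|[|[|r]]].
Qed.

End SingularPointOverRoot.

Lemma dgr_lt0_le N e f (k k' : 'I_4) (i i' j j' : 'I_5) :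
  e k' <= e k -> f i' <= f i -> f j' <= f j ->
  dgr N e f k i j < 0 -> dgr N e f k' i' j' < 0.
Proof. by rewrite /dgr; lia. Qed.

Section DegenerateSection.
Variables (F : fieldType) (N : int) (e : 'I_4 -> int) (f : 'I_5 -> int).
Variable A : 'I_4 -> 'I_5 -> 'I_5 -> {mpoly F[2]}.
Hypothesis e_mono : forall a b : 'I_4, (a <= b)%N -> e a <= e b.
Hypothesis f_mono : forall a b : 'I_5, (a <= b)%N -> f a <= f b.
Hypothesis A_section : is_section N e f A.
Hypothesis d1_15_lt0 : dgr N e f (inord 0) (inord 0) (inord 4) < 0.
Hypothesis d1_24_lt0 : dgr N e f (inord 0) (inord 1) (inord 3) < 0.
Hypothesis d4_12_lt0 : dgr N e f (inord 3) (inord 0) (inord 1) < 0.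

Let A_lt0 : forall k i j, dgr N e f k i j < 0 -> A k i j = 0.
Proof. by case: A_section => _ [_ []]. Qed.

Lemma A_01_eq0 k : A k (inord 0) (inord 1) = 0.
Proof.
apply/A_lt0/(dgr_lt0_le _ (lexx _) (lexx _) d4_12_lt0).
by apply: e_mono; rewrite inordK // -ltnS.
Qed.

Lemma a25_meval_scale (p : 'I_2 -> F) c :
  (A (inord 0) (inord 1) (inord 4)).@[p] = 0 ->
  (A (inord 0) (inord 1) (inord 4)).@[fun i => c * p i] = 0.
Proof.
case: A_section => _ [_ [A_homog _]].
have [/A_lt0 -> | /A_homog a25_homog a25p0] :=
  ltrP (dgr N e f (inord 0) (inord 1) (inord 4)) 0; first by rewrite !meval0.
by rewrite (meval_dhomog _ _ a25_homog) a25p0 mulr0.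
Qed.

Lemma A1_rows01_meval_eq0 (p : 'I_2 -> F) c :
  (A (inord 0) (inord 1) (inord 4)).@[p] = 0 ->
  forall a j : 'I_5, (a <= 1)%N -> (A (inord 0) a j).@[fun i => c * p i] = 0.
Proof.
move=> a25p0 a j le_a1; rewrite -(inord_val a); case: (val a) le_a1 => [|[|//]] _.
  rewrite A_lt0 ?meval0 //; apply: dgr_lt0_le (lexx _) (lexx _) _ d1_15_lt0.
  by apply: f_mono; rewrite inordK // -ltnS.
have [le_j3 | lt_3j] := leqP j 3.
  rewrite A_lt0 ?meval0 //; apply: dgr_lt0_le (lexx _) (lexx _) _ d1_24_lt0.
  by apply: f_mono; rewrite inordK.
have -> : j = inord 4 by apply/val_inj; rewrite /= inordK //; have := ltn_ord j; lia.
exact: a25_meval_scale.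
Qed.

Lemma singular_above_a25_root (p : 'I_2 -> F) : (p ord0, p ord_max) != (0, 0) ->
  (A (inord 0) (inord 1) (inord 4)).@[p] = 0 -> singular_above A p.
Proof.
move=> p_nz a25p0; have [b pb_nz] : exists b, p b != 0.
  have [p0|] := eqVneq (p ord0) 0; last by exists ord0.
  by exists ord_max; apply: contra p_nz => /eqP pmax0; rewrite p0 pmax0.
apply: (singular_above_rows01 A_01_eq0 _ (mulVf pb_nz)).
exact: A1_rows01_meval_eq0.
Qed.

End DegenerateSection.

Lemma a25_root_exists (F : closedFieldType) N e f
    (A : 'I_4 -> 'I_5 -> 'I_5 -> {mpoly F[2]}) :
  is_section N e f A -> dgr N e f (inord 0) (inord 1) (inord 4) != 0 ->
  exists p : 'I_2 -> F, (p ord0, p ord_max) != (0, 0) /\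
    (A (inord 0) (inord 1) (inord 4)).@[p] = 0.
Proof.
case=> _ [_ [A_homog A_lt0]] d25_nz.
have [/A_lt0 -> | /A_homog a25_homog] :=
    ltrP (dgr N e f (inord 0) (inord 1) (inord 4)) 0.
  exact: (@binary_form_root _ 1 _ (rpred0 _)).
by apply: binary_form_root a25_homog _; rewrite absz_gt0.
Qed.

Theorem proposition3p3 (F : closedFieldType) (g : nat)
  (e : 'I_4 -> int) (f : 'I_5 -> int)
  (A : 'I_4 -> 'I_5 -> 'I_5 -> {mpoly F[2]}) :
  (forall a b : 'I_4, (a <= b)%N -> e a <= e b) ->
  (forall a b : 'I_5, (a <= b)%N -> f a <= f b) ->
  \sum_(k < 4) e k = (g + 4)%:Z ->
  \sum_(i < 5) f i = 2 * (g + 4)%:Z ->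
  is_section (g + 4)%:Z e f A ->
  dgr (g + 4)%:Z e f (inord 0) (inord 0) (inord 4) < 0 ->
  dgr (g + 4)%:Z e f (inord 0) (inord 1) (inord 3) < 0 ->
  dgr (g + 4)%:Z e f (inord 3) (inord 0) (inord 1) < 0 ->
  (forall p : 'I_2 -> F, (p ord0, p ord_max) != (0, 0) ->
      (A (inord 0) (inord 1) (inord 4)).@[p] = 0 -> singular_above A p)
  /\
  ((forall p : 'I_2 -> F, (p ord0, p ord_max) != (0, 0) -> ~ singular_above A p) ->
      dgr (g + 4)%:Z e f (inord 0) (inord 1) (inord 4) = 0).
Proof.
move=> e_mono f_mono _ _ A_section d1_15 d1_24 d4_12.
have singular := singular_above_a25_root e_mono f_mono A_section d1_15 d1_24 d4_12.
split=> // never_singular; apply/eqP; apply: contraT => d25_nz.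
have [p [p_nz a25p0]] := a25_root_exists A_section d25_nz.
by case: (never_singular p p_nz (singular p p_nz a25p0)).
Qed.
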